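(* If $f(t)$ is the $f$-polynomial of a simplicial complex, then $f(t)+t f'(t)$ is the $f$-polynomial of a simplicial complex. Equivalently, if $(1,f_0,\dots,f_{d-1})$ is the $f$-vector of a simplicial complex, then so is $(1,2f_0,3f_1,\dots,(d+1)f_{d-1})$.
   Context: A simplicial complex $\Delta$ on a finite ground set is a family of subsets closed under taking subsets; its $f$-vector is $(f_{-1},f_0,\dots,f_{d-1})$ with $f_i$ the number of faces of cardinality $i+1$ ($f_{-1}=1$), and its $f$-polynomial is $\sum_{i=0}^{d}f_{i-1}t^i$. *)

From mathcomp Require Import all_boot all_order all_algebra.
Set Implicit Arguments. Unset Strict Implicit. Unset Printing Implicit Defensive.
Import GRing.Theory.
Local Open Scope ring_scope.

(* We require it to be nonempty (i.e. to contain
   the empty face), matching the convention f_{-1} = 1. *)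
Definition simplicial_complex (T : finType) (D : {set {set T}}) : Prop :=
  set0 \in D /\ forall F G : {set T}, F \in D -> G \subset F -> G \in D.

(* fcard D i = number of faces of cardinality i, i.e. f_{i-1}. *)
Definition fcard (T : finType) (D : {set {set T}}) (i : nat) : nat :=
  #|[set F in D | #|F| == i]|.

(* f-polynomial: sum_{i=0}^{d} f_{i-1} t^i  (faces have size <= #|T|). *)
Definition fpoly (T : finType) (D : {set {set T}}) : {poly int} :=
  \sum_(i < #|T|.+1) ((fcard D i)%:R : int) *: 'X^i.

(* Replace the ground set T by T * bool.  A face F of D together with a marking
   o, which is either no vertex or one vertex of F, gives the face
   {(x, o == Some x) | x in F} of the same size.  These faces and their subsets
   form a complex in which every face of D of size i is counted i + 1 times, so
   its f-vector is ((i + 1) f_{i-1})_i, whose f-polynomial is f + t f'. *)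
From Pilot Require Import Defs.
From mathcomp Require Import all_boot all_order all_algebra.
Set Implicit Arguments. Unset Strict Implicit. Unset Printing Implicit Defensive.
Import GRing.Theory.
Local Open Scope ring_scope.

Lemma coef_fpoly (T : finType) (D : {set {set T}}) k :
  (fpoly D)`_k = (Defs.fcard D k)%:R.
Proof.
rewrite /fpoly coef_sum; under eq_bigr do rewrite coefZ coefXn mulr_natr.
have [ltkT | leTk] := ltnP k #|T|.+1.
  rewrite (bigD1 (Ordinal ltkT)) //= eqxx big1 ?addr0 // => j neq_jk.
  by rewrite eq_sym -[val j == _]/(j == Ordinal ltkT) (negbTE neq_jk).
rewrite big1 => [|j _]; last by rewrite gtn_eqF // (leq_trans (ltn_ord j)).
suff no_face : [set F in D | #|F| == k] = set0 by rewrite /Defs.fcard no_face cards0.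
apply/setP => F; rewrite !inE ltn_eqF ?andbF //.
exact: leq_ltn_trans (max_card F) leTk.
Qed.

Lemma coef_add_X_deriv (R : nzRingType) (p : {poly R}) k :
  (p + 'X * p^`())`_k = p`_k *+ k.+1.
Proof.
rewrite coefD coefXM; case: k => [|k] /=; first by rewrite addr0.
by rewrite coef_deriv -mulrS.
Qed.

Section MarkedComplex.
Variable T : finType.
Implicit Types (D : {set {set T}}) (F : {set T}) (G : {set T * bool}) (o : option T).

Definition markings F : {set option T} := None |: (Some @: F).

Lemma card_markings F : #|markings F| = #|F|.+1.
Proof.
rewrite cardsU1 card_imset; last exact: Some_inj.
suff -> : None \notin Some @: F by [].
by apply/imsetP => -[].
Qed.

Definition mark F o : {set T * bool} :=
  [set (x, o == Some x) | x in F].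

Definition unmark G : {set T} := [set z.1 | z in G].

Definition marking_of G : option T := omap fst [pick z in G | z.2].

Lemma mem_mark F o x b :
  ((x, b) \in mark F o) = (x \in F) && (b == (o == Some x)).
Proof.
apply/imsetP/andP => [[y yF [-> ->]] // | [xF /eqP ->]].
by exists x.
Qed.

Lemma card_mark F o : #|mark F o| = #|F|.
Proof. by apply: card_imset => x y []. Qed.

Lemma unmark_mark F o : unmark (mark F o) = F.
Proof. by rewrite /unmark -imset_comp imset_id. Qed.

Lemma marking_of_mark F o : o \in markings F -> marking_of (mark F o) = o.
Proof.
rewrite /marking_of; case: pickP => [[x b] /andP [] | no_marked].
  by rewrite mem_mark => /andP [_ /eqP ->] /= /eqP ->.
case: o no_marked => // x no_marked /setU1P [//|/imsetP [y yF [eq_xy]]].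
by have := no_marked (x, true); rewrite /= andbT mem_mark eq_xy yF eqxx.
Qed.

Lemma marking_ofP G : marking_of G \in markings (unmark G).
Proof.
rewrite /marking_of; case: pickP => [z /andP [zG _] | _] /=; last exact: setU11.
by rewrite /markings setU1r //; apply/imset_f/imset_f.
Qed.

Lemma mark_inj F o F' o' : o \in markings F -> o' \in markings F' ->
  mark F o = mark F' o' -> (F, o) = (F', o').
Proof.
move=> oF o'F' /(congr1 (fun G : {set T * bool} => (unmark G, marking_of G))).
by rewrite /= !unmark_mark !marking_of_mark.
Qed.

Lemma unmark_sub G F o : G \subset mark F o -> unmark G \subset F.
Proof.
move=> /subsetP GF; apply/subsetP => _ /imsetP [[x b] /GF + ->].
by rewrite mem_mark => /andP [].
Qed.

Lemma sub_mark_unmark G F o :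
  G \subset mark F o -> G = mark (unmark G) (marking_of G).
Proof.
move=> /subsetP GF.
have marked_eq z : z \in G -> z.2 = (marking_of G == Some z.1).
  rewrite /marking_of; case: pickP => [[y b] /andP [yG /= b_true] | no_marked] zG /=.
    have /GF := yG; rewrite mem_mark b_true => /andP [_ /eqP/esym/eqP o_y].
    by case: z zG => x c /GF; rewrite mem_mark o_y => /andP [_ /eqP].
  by have := no_marked z; rewrite zG => /= ->.
apply/setP => [[x b]]; rewrite mem_mark; apply/idP/andP => [xG | [xP /eqP ->]].
  split; first by apply/imsetP; exists (x, b).
  by rewrite [b](marked_eq _ xG).
by case/imsetP: xP => [[y c] yG /= eq_xy]; rewrite eq_xy -(marked_eq _ yG).
Qed.

Definition marked_complex D : {set {set T * bool}} :=
  [set G : {set T * bool} |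
    [exists F in D, exists o in markings F, G \subset mark F o]].

Lemma marked_complexP D G :
  reflect (exists F o, [/\ F \in D, o \in markings F & G \subset mark F o])
          (G \in marked_complex D).
Proof.
rewrite inE; apply: (iffP existsP) => [[F /andP [FD /existsP [o /andP [oF GF]]]]|].
  by exists F, o.
move=> [F [o [FD oF GF]]].
by exists F; rewrite FD; apply/existsP; exists o; rewrite oF.
Qed.

Lemma simplicial_complex_marked D :
  simplicial_complex D -> simplicial_complex (marked_complex D).
Proof.
move=> [D0 _]; split.
  by apply/marked_complexP; exists set0, None; rewrite D0 setU11 sub0set.
move=> G H /marked_complexP [F [o [FD oF GF]]] HG.
by apply/marked_complexP; exists F, o; split; last exact: subset_trans HG GF.
Qed.

Lemma fcard_marked_complex D i :
  (forall F F', F \in D -> F' \subset F -> F' \in D) ->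
  Defs.fcard (marked_complex D) i = (i.+1 * Defs.fcard D i)%N.
Proof.
move=> downD; rewrite /Defs.fcard; set faces := [set F in D | #|F| == i].
pose marked_faces :=
  [set p : {set T} * option T | (p.1 \in faces) && (p.2 \in markings p.1)].
have -> : [set G in marked_complex D | #|G| == i] =
          [set mark p.1 p.2 | p in marked_faces].
  apply/setP => G; rewrite inE; apply/andP/imsetP => [[]|].
    move=> /marked_complexP [F [o [FD _ GF]]] Gi.
    exists (unmark G, marking_of G); last exact: sub_mark_unmark GF.
    rewrite inE /= marking_ofP andbT inE (downD _ _ FD (unmark_sub GF)) /=.
    by rewrite -(card_mark _ (marking_of G)) -(sub_mark_unmark GF).
  move=> [[F o]]; rewrite inE /= inE => /andP [/andP [FD Fi] oF] ->.
  by rewrite card_mark; split=> //; apply/marked_complexP; exists F, o.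
rewrite card_in_imset => [|[F o] [F' o']]; last first.
  rewrite ![_ \in marked_faces]inE /= => /andP [_ oF] /andP [_ o'F'].
  exact: mark_inj.
rewrite -sum1_card.
rewrite (eq_bigl (fun p => (p.1 \in faces) && (p.2 \in markings p.1))) => [|p];
  last by rewrite inE.
rewrite -(pair_big_dep _ (fun F o => o \in markings F) (fun _ _ => 1%N)) /=.
rewrite (eq_bigr (fun _ => i.+1)) => [|F]; last first.
  by move=> /setIdP [_ /eqP <-]; rewrite sum1_card card_markings.
by rewrite sum_nat_const mulnC.
Qed.

End MarkedComplex.

Theorem proposition3p7 (T : finType) (D : {set {set T}}) :
  simplicial_complex D ->
  exists (T' : finType) (D' : {set {set T'}}),
    simplicial_complex D' /\ fpoly D' = fpoly D + 'X * (fpoly D)^`().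
Proof.
move=> scD; exists (T * bool)%type, (marked_complex D).
split; first exact: simplicial_complex_marked.
apply/polyP => k; rewrite coef_add_X_deriv !coef_fpoly.
by rewrite fcard_marked_complex ?natrM ?mulr_natl //; case: scD.
Qed.
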